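(* For $1\mid t_j=1\mid\sum C_j$ with obligatory tests, the algorithm that first executes the tests of all $n$ jobs (in any order) and afterwards executes the processing parts of all jobs in non-decreasing order of $p_j$ is $2$-competitive.
   Context: Scheduling with obligatory tests and uniform test times: $n$ jobs on a single machine, each with test time $t_j=1$ and an unknown processing time $p_j\ge0$ revealed only when the test of $j$ completes. The test of a job must be executed before its processing part (which can be executed any time afterwards); operations are non-preemptive, one at a time. $C_j$ is the completion time of the processing part of $j$; objective $\sum_jC_j$. An algorithm is $\rho$-competitive if $\mathit{ALG}\le\rho\cdot\mathit{OPT}$ on every instance, where $\mathit{OPT}$ is the offline optimum (tests also obligatory). *)

From mathcomp Require Import all_boot all_order all_algebra all_fingroup.
Set Implicit Arguments. Unset Strict Implicit. Unset Printing Implicit Defensive.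
Import Order.TTheory GRing.Theory Num.Theory.
Local Open Scope ring_scope.

(* An operation of job j is (j, false) = its test (length 1) or
   (j, true) = its processing part (length p j). *)
Definition op (n : nat) := ('I_n * bool)%type.

Definition op_len (R : realFieldType) (n : nat) (p : 'I_n -> R) (o : op n) : R :=
  if o.2 then p o.1 else 1.

(* A (non-preemptive, single-machine) schedule assigns a start time to every
   operation. *)
Definition feasible (R : realFieldType) (n : nat) (p : 'I_n -> R)
    (s : op n -> R) : Prop :=
  [/\ forall o, 0 <= s o,
      forall o o', o != o' ->
        s o + op_len p o <= s o' \/ s o' + op_len p o' <= s o
    & forall j, s (j, false) + 1 <= s (j, true)].

Definition compl (R : realFieldType) (n : nat) (p : 'I_n -> R) (s : op n -> R)
    (j : 'I_n) : R := s (j, true) + p j.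

Definition sumC (R : realFieldType) (n : nat) (p : 'I_n -> R) (s : op n -> R) : R :=
  \sum_(j < n) compl p s j.

(* The algorithm's schedule: tests executed back to back from time 0 in the
   order tau (tau k = k-th tested job), then processing parts back to back
   from time n in the order sigma (sigma k = k-th processed job). *)
Definition alg_sched (R : realFieldType) (n : nat) (p : 'I_n -> R)
    (tau sigma : 'S_n) (o : op n) : R :=
  if o.2 then n%:R + \sum_(i < n | (i < (sigma^-1)%g o.1)%N) p (sigma i)
  else (((tau^-1)%g o.1 : nat)%:R).

Definition sorted_by_p (R : realFieldType) (n : nat) (p : 'I_n -> R)
    (sigma : 'S_n) : Prop :=
  forall i k : 'I_n, (i <= k)%N -> p (sigma i) <= p (sigma k).

From mathcomp Require Import all_boot all_order all_algebra all_fingroup.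
From mathcomp Require Import lra.
Set Implicit Arguments. Unset Strict Implicit. Unset Printing Implicit Defensive.
Import Order.TTheory GRing.Theory Num.Theory.
Local Open Scope ring_scope.

(* For any feasible schedule with completion times C, the operations of all
   jobs i with C_i <= C_j are packed into [0, C_j], so
   sum_(i | C_i <= C_j) (1 + p_i) <= C_j.  Summing this over j, and adding it
   to the same bound with the roles of i and j exchanged, every pair {i, j}
   is charged at least 1 + min(p_i, p_j), so 2 OPT >= n^2 + 2 D, where
   D = sum_j sum_(i processed no later than j) p_i.  The algorithm finishes
   all tests at time n and then runs SPT, so ALG = n^2 + D. *)

Lemma sum_len_le_of_disjoint (R : realFieldType) (T : finType)
    (st len : T -> R) (A : {set T}) (E : R) :
  (forall o, 0 <= len o) -> (forall o, 0 <= st o) ->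
  (forall o o', o != o' -> st o + len o <= st o' \/ st o' + len o' <= st o) ->
  0 <= E -> (forall o, o \in A -> st o + len o <= E) ->
  \sum_(o in A) len o <= E.
Proof.
move=> len_ge0 st_ge0 disj.
elim: {A}_.+1 {-2}A (ltnSn #|A|) E => // k IH A ltAk E E_ge0 endA.
have [->|[o0 Ao0]] := set_0Vmem A; first by rewrite big_set0.
have [o Ao maxo] := @arg_maxP _ R T o0 (mem A) st Ao0.
have {}Ao : o \in A := Ao.
have ltA'k : (#|A :\ o| < k)%N by move: ltAk; rewrite (cardsD1 o) Ao.
rewrite (big_setD1 o Ao) /=.
have [len0|len_neq0] := eqVneq (len o) 0.
  rewrite len0 add0r; apply: IH => // x /setD1P[_ Ax]; exact: endA.
apply: le_trans (endA o Ao); rewrite addrC lerD2r.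
apply: IH => // x /setD1P[xo Ax].
have len_gt0 : 0 < len o by rewrite lt_def len_neq0 len_ge0.
have := maxo x Ax; case: (disj x o xo) => // o_before_x x_le_o.
have := le_trans o_before_x x_le_o; rewrite -lerBrDl subrr; lra.
Qed.

Lemma sumr_sym (R : nmodType) (n : nat) (f : 'I_n -> 'I_n -> R) :
  \sum_(j < n) \sum_(i < n) (f i j + f j i) = (\sum_(j < n) \sum_(i < n) f i j) *+ 2.
Proof.
under eq_bigr do rewrite big_split.
by rewrite big_split /= [X in _ + X]exchange_big.
Qed.

Section Bounds.

Variables (R : realFieldType) (n : nat) (p : 'I_n -> R).
Hypothesis p_ge0 : forall j, 0 <= p j.

Lemma op_len_ge0 (o : op n) : 0 <= op_len p o.
Proof. by case: o => j [] //=; rewrite /op_len /=. Qed.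

Section OptLowerBound.

Variable s : op n -> R.
Hypothesis s_feas : feasible p s.

Definition charge (i j : 'I_n) : R :=
  if compl p s i <= compl p s j then 1 + p i else 0.

Lemma compl_ge0 j : 0 <= compl p s j.
Proof. by case: s_feas => s_ge0 _ _; rewrite addr_ge0. Qed.

Lemma sum_charge_le_compl j : \sum_(i < n) charge i j <= compl p s j.
Proof.
case: s_feas => s_ge0 disj prec.
pose A := [set o : op n | compl p s o.1 <= compl p s j].
have -> : \sum_(i < n) charge i j = \sum_(o in A) op_len p o.
  transitivity (\sum_(i < n) \sum_(b : bool)
                  (if (i, b) \in A then op_len p (i, b) else 0)).
    apply: eq_bigr => i _; rewrite big_bool !inE /charge /op_len /=.
    by case: ifP => _; rewrite ?addr0 // addrC.
  by rewrite pair_bigA [RHS]big_mkcond; apply: eq_bigr => -[].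
apply: sum_len_le_of_disjoint => //; first exact: op_len_ge0.
  exact: compl_ge0.
case=> i [] /[!inE] /= Hi //; apply: le_trans Hi.
by apply: le_trans (prec i) _; rewrite /compl lerDl.
Qed.

Lemma sum_charge_le_sumC : \sum_(j < n) \sum_(i < n) charge i j <= sumC p s.
Proof. by apply: ler_sum => j _; apply: sum_charge_le_compl. Qed.

End OptLowerBound.

Section SPT.

Variable sigma : 'S_n.
Hypothesis sigma_sorted : sorted_by_p p sigma.

Let rank (j : 'I_n) : nat := (sigma^-1)%g j.

Definition spt_delay (i j : 'I_n) : R := if (rank i <= rank j)%N then p i else 0.

Lemma rank_inj : injective rank.
Proof. by move=> i j /val_inj /perm_inj. Qed.

Lemma sumC_alg_sched tau :
  sumC p (alg_sched p tau sigma) = \sum_(j < n) \sum_(i < n) (1 + spt_delay i j).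
Proof.
rewrite /sumC; apply: eq_bigr => j _; rewrite big_split sumr_const card_ord /=.
rewrite /compl /alg_sched /= -addrA; congr (_ + _).
rewrite (reindex_inj (@perm_inj _ (sigma^-1)%g)) /=.
under eq_bigr do rewrite permKV.
rewrite big_mkcond [RHS](bigD1 j) //= /spt_delay leqnn addrC; congr (_ + _).
rewrite [RHS]big_mkcond; apply: eq_bigr => i _.
by rewrite -/(rank i) -/(rank j) ltn_neqAle (inj_eq rank_inj); case: (i != j).
Qed.

Lemma spt_delay_ge0 i j : 0 <= spt_delay i j.
Proof. by rewrite /spt_delay; case: ifP. Qed.

Lemma rank_le_p_le i j : (rank i <= rank j)%N -> p i <= p j.
Proof. by move/sigma_sorted; rewrite !permKV. Qed.

Lemma spt_delay_le_charge (s : op n -> R) i j :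
  1 + (spt_delay i j + spt_delay j i) <= charge s i j + charge s j i.
Proof.
rewrite /spt_delay /charge.
have [->|ij] := eqVneq i j; first by rewrite leqnn le_refl; have := p_ge0 j; lra.
have := p_ge0 i; have := p_ge0 j.
case: (ltngtP (rank i) (rank j)) => [/ltnW/rank_le_p_le|/ltnW/rank_le_p_le|];
  last by move/rank_inj/eqP; rewrite (negPf ij).
all: by case: (leP (compl p s i) (compl p s j));
        case: (leP (compl p s j) (compl p s i)); lra.
Qed.

End SPT.

End Bounds.

Theorem mainTheorem15 (R : realFieldType) (n : nat) (p : 'I_n -> R)
    (tau sigma : 'S_n) :
  (forall j, 0 <= p j) ->
  sorted_by_p p sigma ->
  forall s : op n -> R, feasible p s ->
    sumC p (alg_sched p tau sigma) <= 2 * sumC p s.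
Proof.
move=> p_ge0 sorted s s_feas.
set d := spt_delay p sigma; set c := charge p s.
have pairs : \sum_(j < n) \sum_(i < n) (1 + (d i j + d j i))
             <= (\sum_(j < n) \sum_(i < n) c i j) *+ 2.
  rewrite -sumr_sym; do 2!apply: ler_sum => ? _; exact: spt_delay_le_charge.
have split_pairs : \sum_(j < n) \sum_(i < n) (1 + (d i j + d j i)) =
    sumC p (alg_sched p tau sigma) + \sum_(j < n) \sum_(i < n) d j i.
  rewrite (sumC_alg_sched _ _ tau) -big_split; apply: eq_bigr => j _.
  by rewrite -big_split; apply: eq_bigr => i _; rewrite addrA.
have D_ge0 : 0 <= \sum_(j < n) \sum_(i < n) d j i.
  by do 2!apply: sumr_ge0 => ? _; apply: spt_delay_ge0.
have c_le := sum_charge_le_sumC p_ge0 s_feas.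
move: pairs; rewrite split_pairs mulr2n; lra.
Qed.
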